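(* The cardinality of any SudoQ of size $4\times4$ belongs to the set $\{4,6,8,16\}$.
   Context: For $N\ge1$, a SudoQ (quantum Sudoku) of size $N^2\times N^2$ is an $N^2\times N^2$ array of unit vectors in $\mathbb{C}^{N^2}$ such that the entries of each row, of each column, and of each of the $N^2$ disjoint $N\times N$ blocks (obtained by partitioning rows and columns into $N$ consecutive groups of $N$) form an orthonormal basis of $\mathbb{C}^{N^2}$. Its cardinality is the number of distinct entries, vectors differing only by a global phase being considered equal. Here $N=2$. *)

From HB Require Import structures.
From mathcomp Require Import all_boot all_order all_algebra.
From mathcomp Require Import reals.
From mathcomp Require Import complex.
Set Implicit Arguments. Unset Strict Implicit. Unset Printing Implicit Defensive.
Import Order.TTheory GRing.Theory Num.Theory.
Local Open Scope ring_scope.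
Local Open Scope complex_scope.

Definition hdot (R : rcfType) (n : nat) (u v : 'rV[R[i]]_n) : R[i] :=
  \sum_(k < n) ((u 0 k)^* * v 0 k).

Definition is_onb (R : rcfType) (n : nat) (I : finType) (f : I -> 'rV[R[i]]_n) : Prop :=
  [/\ forall a, hdot (f a) (f a) = 1,
      forall a b, a != b -> hdot (f a) (f b) = 0
    & row_full (\matrix_(k < #|I|) f (enum_val k))].

(* Position of the p-th row (or column) inside the a-th band of 2 rows/cols. *)
Definition blk (a p : 'I_2) : 'I_4 := inord (2 * a + p)%N.

Definition sudoQ4 (R : rcfType) (S : 'I_4 -> 'I_4 -> 'rV[R[i]]_4) : Prop :=
  [/\ forall r : 'I_4, is_onb (fun c : 'I_4 => S r c),
      forall c : 'I_4, is_onb (fun r : 'I_4 => S r c)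
    & forall a b : 'I_2,
        is_onb (fun pq : 'I_2 * 'I_2 => S (blk a pq.1) (blk b pq.2))].

Definition phase_eq (R : rcfType) (n : nat) (u v : 'rV[R[i]]_n) : Prop :=
  exists z : R[i], `|z| = 1 /\ u = z *: v.

(* The
   cardinality of S is then #|Rep|. *)
Definition phase_reps (R : rcfType) (S : 'I_4 -> 'I_4 -> 'rV[R[i]]_4)
    (Rep : {set 'I_4 * 'I_4}) : Prop :=
  (forall c : 'I_4 * 'I_4, exists2 d, d \in Rep & phase_eq (S c.1 c.2) (S d.1 d.2)) /\
  (forall d e, d \in Rep -> e \in Rep -> d != e -> ~ phase_eq (S d.1 d.2) (S e.1 e.2)).

From HB Require Import structures.
From mathcomp Require Import all_boot all_order all_algebra.
From mathcomp Require Import reals complex boolp ring.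
Set Implicit Arguments. Unset Strict Implicit. Unset Printing Implicit Defensive.
Import Order.TTheory GRing.Theory Num.Theory.
Local Open Scope ring_scope.

(* The entries of the top-left block form an orthonormal basis, and each entry is orthogonal to
   the top-left entries it shares a row, column or block with. Call an entry degenerate if it is
   also orthogonal to a top-left entry it shares no line with. Listing the cells block by block, a non-degenerate
   entry opens a new phase class: every earlier entry either shares a line with it or vanishes
   on a top-left vector on which it does not. A degenerate entry repeats an earlier class: in the
   two off-diagonal blocks it is a top-left entry up to phase, and in the bottom-right block it
   is orthogonal to a whole row or column of the top-left block, hence a phase multiple of an
   off-diagonal entry. The two entries of a top-right row (bottom-left column) are degenerate
   together, and the bottom-right entries are degenerate exactly when some off-diagonal entry is.
   Finally, a bottom-right entry lies in the span of two bottom-left entries of one row and in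
   the span of two top-right entries of one column; comparing its top-left coordinates gives a
   cross-ratio identity which forces degeneracy to fill a whole off-diagonal block. Counting the
   non-degenerate entries gives 16, 8, 6 or 4. *)

Section HermitianProduct.
Variables (R : rcfType) (n : nat).
Local Notation vec := 'rV[R[i]]_n.
Implicit Types (u w : vec) (s : seq vec).

Lemma hdotDr u w1 w2 : hdot u (w1 + w2) = hdot u w1 + hdot u w2.
Proof. by rewrite /hdot -big_split; apply: eq_bigr => k _; rewrite mxE mulrDr. Qed.

Lemma hdotZr a u w : hdot u (a *: w) = a * hdot u w.
Proof. by rewrite /hdot mulr_sumr; apply: eq_bigr => k _; rewrite mxE mulrCA. Qed.

Lemma hdotC u w : hdot w u = (hdot u w)^*.
Proof.
by rewrite /hdot rmorph_sum; apply: eq_bigr => k _; rewrite rmorphM /= conjCK mulrC.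
Qed.

Lemma hdotDl u1 u2 w : hdot (u1 + u2) w = hdot u1 w + hdot u2 w.
Proof. by rewrite hdotC hdotDr rmorphD /= -!hdotC. Qed.

Lemma hdotZl a u w : hdot (a *: u) w = a^* * hdot u w.
Proof. by rewrite hdotC hdotZr rmorphM /= -hdotC. Qed.

Lemma hdot0r u : hdot u 0 = 0.
Proof. by rewrite -(scale0r 0) hdotZr mul0r. Qed.

Definition orthonormal s :=
  all (fun u => hdot u u == 1) s && pairwise (fun u w => hdot u w == 0) s.

Lemma orthonormal_hdot s (i j : nat) : orthonormal s -> (i < size s)%N -> (j < size s)%N ->
  hdot s`_i s`_j = (i == j)%:R.
Proof.
case/andP=> /allP unit /(pairwiseP 0) orth ti tj.
case: (ltngtP i j) => [ij | ji | ->]; first exact/eqP/orth.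
- by rewrite hdotC (eqP (orth _ _ tj ti ji)) conjC0.
- by apply/eqP; rewrite unit ?mem_nth.
Qed.

Lemma orthonormal_expansion s u : orthonormal s -> size s = n ->
  u = \sum_(e <- s) hdot e u *: e.
Proof.
move=> on sz.
have on_ord (i j : 'I_n) : hdot s`_i s`_j = (i == j)%:R.
  by rewrite orthonormal_hdot ?sz.
pose M : 'M[R[i]]_n := \matrix_(i, k) s`_i 0 k.
pose Mh : 'M[R[i]]_n := \matrix_(i, j) (M j i)^*.
have MMh : M *m Mh = 1%:M.
  apply/matrixP => i j; rewrite !mxE eq_sym -on_ord.
  by apply: eq_bigr => k _; rewrite !mxE mulrC.
(* The rows of M are orthonormal, so M is unitary and also Mh *m M = 1. *)
have MhM k l : \sum_i (M i k)^* * M i l = (k == l)%:R.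
  have := congr1 (fun A : 'M[R[i]]_n => A k l) (mulmx1C MMh); rewrite !mxE => <-.
  by apply: eq_bigr => i _; rewrite !mxE.
rewrite (big_nth 0) sz big_mkord; apply/rowP => l; rewrite summxE.
have -> : \sum_(i < n) (hdot s`_i u *: s`_i) 0 l = \sum_k u 0 k * \sum_i (M i k)^* * M i l.
  under [RHS]eq_bigr => k _ do rewrite mulr_sumr.
  rewrite exchange_big /=; apply: eq_bigr => i _; rewrite !mxE /hdot mulr_suml.
  by apply: eq_bigr => k _; rewrite !mxE mulrA [_ * u 0 k]mulrC.
under eq_bigr => k _ do rewrite MhM.
by rewrite (bigD1 l) //= eqxx mulr1 big1 ?addr0 // => k /negbTE->; rewrite mulr0.
Qed.

Lemma expansion_cat s1 s2 u : orthonormal (s1 ++ s2) -> size (s1 ++ s2) = n ->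
  all (fun e => hdot e u == 0) s2 -> u = \sum_(e <- s1) hdot e u *: e.
Proof.
move=> on sz /allP u_orth; rewrite {1}(orthonormal_expansion u on sz) big_cat /=.
by rewrite [X in _ + X]big1_seq ?addr0 // => e /andP[_ /u_orth/eqP->]; rewrite scale0r.
Qed.

Lemma span2_coord_neq0 e1 e2 a b u : u = a *: e1 + b *: e2 -> hdot u u = 1 ->
  (a != 0) || (b != 0).
Proof.
move=> -> uu; apply: contraPT uu; rewrite negb_or !negbK => /andP[/eqP-> /eqP->].
by rewrite !scale0r addr0 hdot0r => /eqP; rewrite eq_sym oner_eq0.
Qed.

Lemma span2_expansion e1 e2 s u : orthonormal [:: e1, e2 & s] ->
  size [:: e1, e2 & s] = n -> all (fun e => hdot e u == 0) s ->
  u = hdot e1 u *: e1 + hdot e2 u *: e2.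
Proof.
by move=> on sz us; rewrite {1}(@expansion_cat [:: e1; e2] s u) // !big_cons big_nil addr0.
Qed.

Lemma twin_coord_eq0 e1 e2 s u w : orthonormal [:: e1, e2 & s] ->
  size [:: e1, e2 & s] = n -> hdot u u = 1 -> hdot w w = 1 -> hdot u w = 0 ->
  all (fun e => (hdot e u == 0) && (hdot e w == 0)) s ->
  (hdot e1 w == 0) = (hdot e2 u == 0).
Proof.
move=> on sz uu ww uw /allP sorth.
have eu : u = hdot e1 u *: e1 + hdot e2 u *: e2.
  by apply: span2_expansion on sz _; apply/allP => e /sorth/andP[].
have ew : w = hdot e1 w *: e1 + hdot e2 w *: e2.
  by apply: span2_expansion on sz _; apply/allP => e /sorth/andP[].
have := span2_coord_neq0 eu uu; have := span2_coord_neq0 ew ww.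
have : hdot u w = (hdot e1 u)^* * hdot e1 w + (hdot e2 u)^* * hdot e2 w.
  by rewrite {1}eu hdotDl !hdotZl.
rewrite uw; move: (hdot e1 u) (hdot e2 u) (hdot e1 w) (hdot e2 w) => a b c d e0 ncd nab.
apply/idP/idP => /eqP z; move: e0; rewrite z ?mulr0 ?conjC0 ?mul0r ?add0r ?addr0.
- move/esym/eqP; rewrite mulf_eq0 conjC_eq0 => /orP[//|/eqP d0].
  by move: ncd; rewrite z d0 eqxx.
- move/esym/eqP; rewrite mulf_eq0 conjC_eq0 => /orP[/eqP a0|//].
  by move: nab; rewrite z a0 eqxx.
Qed.
End HermitianProduct.

Section PhaseEquality.
Variables (R : rcfType) (n : nat).
Local Notation vec := 'rV[R[i]]_n.
Implicit Types (u w : vec) (s : seq vec).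

Lemma norm1_neq0 (z : R[i]) : `|z| = 1 -> z != 0.
Proof. by move=> nz; rewrite -normr_gt0 nz ltr01. Qed.

Lemma phase_eq_refl u : phase_eq u u.
Proof. by exists 1; rewrite normr1 scale1r. Qed.

Lemma phase_eq_sym u w : phase_eq u w -> phase_eq w u.
Proof.
case=> z [nz ->]; exists z^-1; rewrite normfV nz invr1 scalerA mulVf ?scale1r //.
exact: norm1_neq0.
Qed.

Lemma phase_eq_trans u1 u2 u3 : phase_eq u1 u2 -> phase_eq u2 u3 -> phase_eq u1 u3.
Proof.
by case=> z [nz ->] [y [ny ->]]; exists (z * y); rewrite normrM nz ny mulr1 scalerA.
Qed.

Lemma phase_eq_hdotl_eq0 u u' w : phase_eq u u' -> (hdot u w == 0) = (hdot u' w == 0).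
Proof. by case=> z [/norm1_neq0 nz ->]; rewrite hdotZl mulf_eq0 conjC_eq0 (negbTE nz). Qed.

Lemma phase_eq_hdotr_eq0 u u' w : phase_eq u u' -> (hdot w u == 0) = (hdot w u' == 0).
Proof. by case=> z [/norm1_neq0 nz ->]; rewrite hdotZr mulf_eq0 (negbTE nz). Qed.

Lemma orth_not_phase_eq u w : hdot u u = 1 -> hdot u w = 0 -> ~ phase_eq u w.
Proof. by move=> uu uw /(phase_eq_hdotr_eq0 u); rewrite uu uw eqxx oner_eq0. Qed.

Lemma phase_eq_of_orthonormal f s u : orthonormal (f :: s) -> size (f :: s) = n ->
  hdot u u = 1 -> all (fun e => hdot e u == 0) s -> phase_eq u f.
Proof.
move=> on sz uu us; have eu := @expansion_cat _ _ [:: f] s u on sz us.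
rewrite big_seq1 in eu; exists (hdot f u); split=> //.
case/andP: on => /andP[/eqP ff _] _.
move: uu; rewrite {1 2}eu hdotZl hdotZr ff mulr1 mulrC -normCK => /eqP.
by rewrite sqrp_eq1 ?normr_ge0 // => /eqP.
Qed.
End PhaseEquality.

Section FirstRepresentatives.
Variables (T : finType) (equiv : T -> T -> Prop) (rank : T -> nat).
Hypotheses (equiv_refl : forall x, equiv x x)
  (equiv_sym : forall x y, equiv x y -> equiv y x)
  (equiv_trans : forall x y z, equiv x y -> equiv y z -> equiv x z)
  (rank_inj : injective rank).

Definition first_reps : {set T} :=
  [set x | [forall y, (rank y < rank x)%N ==> ~~ `[< equiv y x >]]].

Lemma mem_first_reps x :
  reflect (forall y, (rank y < rank x)%N -> ~ equiv y x) (x \in first_reps).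
Proof.
rewrite inE; apply: (iffP forallP) => [h y lt | h y].
  by move/asboolP; apply/negP; move/implyP: (h y); apply.
by apply/implyP => /h; apply: contra_notN => /asboolP.
Qed.

Lemma card_first_reps (Rep : {set T}) :
  (forall x, exists2 y, y \in Rep & equiv x y) ->
  (forall x y, x \in Rep -> y \in Rep -> x != y -> ~ equiv x y) ->
  #|Rep| = #|first_reps|.
Proof.
move=> cover sep.
pose m x := [arg min_(y < x | `[< equiv y x >]) rank y].
have mP x : equiv (m x) x /\ forall y, equiv y x -> (rank (m x) <= rank y)%N.
  rewrite /m; case: arg_minnP => [|y /asboolP yx min]; first exact/asboolP/equiv_refl.
  by split=> // z /asboolP/min.
have m_inj : {in Rep &, injective m}.
  move=> x y xR yR mxy; case: (eqVneq x y) => // ne; case: (sep x y xR yR ne).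
  by apply: equiv_trans (equiv_sym (mP x).1) _; rewrite mxy; exact: (mP y).1.
rewrite -(card_in_imset m_inj); apply: eq_card => x; apply/imsetP/mem_first_reps.
- case=> y _ -> z lt zy; have [my min] := mP y.
  by move: (min z (equiv_trans zy my)); rewrite leqNgt lt.
- move=> first; have [y yR xy] := cover x; exists y => //; have [my min] := mP y.
  have := min x xy; rewrite leq_eqVlt => /orP[/eqP/rank_inj //|lt].
  by case: (first _ lt); apply: equiv_trans my (equiv_sym xy).
Qed.
End FirstRepresentatives.

Lemma cross_ratio (F : idomainType) (a b g d xa xc yb yd pa pb qc qd : F) :
  (a != 0) || (b != 0) ->
  b * xa = d * pa -> a * yb = d * pb -> b * xc = g * qc -> a * yd = g * qd ->
  xa * yd * pb * qc = xc * yb * pa * qd.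
Proof.
move=> ab ea eb ec ed; apply/eqP; rewrite -subr_eq0.
have eqa : a * (xa * yd * pb * qc - xc * yb * pa * qd) =
  xa * pb * qc * (a * yd - g * qd) - xc * pa * qd * (a * yb - d * pb)
  + pb * qd * xa * (g * qc - b * xc) + pb * qd * xc * (b * xa - d * pa) by ring.
have eqb : b * (xa * yd * pb * qc - xc * yb * pa * qd) =
  yd * pb * qc * (b * xa - d * pa) - yb * pa * qd * (b * xc - g * qc)
  + pa * qc * yd * (d * pb - a * yb) + pa * qc * yb * (a * yd - g * qd) by ring.
rewrite ea eb ec ed !subrr !mulr0 !addr0 subrr in eqa eqb.
by case/orP: ab => [nz | nz]; [move/eqP: eqa | move/eqP: eqb]; rewrite mulf_eq0 (negbTE nz).
Qed.

Lemma cross_ratio_neq0 (F : idomainType) (a b d xa yb pa pb : F) :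
  (a != 0) || (b != 0) -> b * xa = d * pa -> a * yb = d * pb ->
  xa != 0 -> yb != 0 -> pa != 0 -> pb != 0 -> (a != 0) && (b != 0).
Proof.
move=> ab ea eb xa0 yb0 pa0 pb0; apply/andP; split.
- apply: contraTneq ab => a0; rewrite a0 eqxx /= negbK.
  have /eqP : d * pb = 0 by rewrite -eb a0 mul0r.
  rewrite mulf_eq0 (negbTE pb0) orbF => /eqP d0.
  by move/eqP: ea; rewrite d0 mul0r mulf_eq0 (negbTE xa0) orbF.
- apply: contraTneq ab => b0; rewrite b0 eqxx orbF negbK.
  have /eqP : d * pa = 0 by rewrite -ea b0 mul0r.
  rewrite mulf_eq0 (negbTE pa0) orbF => /eqP d0.
  by move/eqP: eb; rewrite d0 mul0r mulf_eq0 (negbTE yb0) orbF.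
Qed.

Lemma cross_zero_pattern (p0 p1 q0 q1 x0 x1 y0 y1 : bool) :
  [|| x0, y1, p1 | q0] = [|| x1, y0, p0 | q1] ->
  [|| x0, y1, p0 | q1] = [|| x1, y0, p1 | q0] ->
  ~~ (p0 && p1) -> ~~ (q0 && q1) -> ~~ (x0 && x1) -> ~~ (y0 && y1) ->
  [|| p0 || p1, q0 || q1, x0 || x1 | y0 || y1] ->
  [|| p1 && q1, p0 && q0, x1 && y1 | x0 && y0].
Proof. by case: p0; case: p1; case: q0; case: q1; case: x0; case: x1; case: y0; case: y1. Qed.

Definition cell := ('I_4 * 'I_4)%type.
Local Notation o i := (@Ordinal 4 i isT).

Definition band (i : 'I_4) : bool := (1 < i)%N.

Definition adj (c d : cell) : bool :=
  (c != d) && [|| c.1 == d.1, c.2 == d.2 | (band c.1 == band d.1) && (band c.2 == band d.2)].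

Definition cell_rank (c : cell) : nat := 8 * band c.1 + 4 * band c.2 + 2 * odd c.1 + odd c.2.

Definition tl_cells : seq cell := [:: (o 0, o 0); (o 0, o 1); (o 1, o 0); (o 1, o 1)].

Definition tl_lines : seq (cell * cell) :=
  [:: ((o 0, o 0), (o 0, o 1)); ((o 1, o 0), (o 1, o 1));
      ((o 0, o 0), (o 1, o 0)); ((o 0, o 1), (o 1, o 1))].

Definition cells : seq cell :=
  [seq (i, j) | i <- [:: o 0; o 1; o 2; o 3], j <- [:: o 0; o 1; o 2; o 3]].

Lemma mem_cells c : c \in cells.
Proof. by case: c => -[[|[|[|[|i]]]] ?] [[|[|[|[|j]]]] ?]. Qed.

Lemma all_cells (A B : pred cell) : all (fun c => A c ==> B c) cells -> forall c, A c -> B c.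
Proof. by move=> /allP AB c; apply/implyP/AB/mem_cells. Qed.

Lemma all_cells2 (A B : cell -> cell -> bool) :
  all (fun c => all (fun d => A c d ==> B c d) cells) cells -> forall c d, A c d -> B c d.
Proof.
move=> /allP ABc c d; apply/implyP.
by apply: (allP (ABc c (mem_cells c))); apply: mem_cells.
Qed.

Lemma cell_rank_inj : injective cell_rank.
Proof. by move=> c d; apply: contra_eq; move: c d; apply: all_cells2; vm_compute. Qed.

Lemma ord4_cases (i : 'I_4) : [\/ i = o 0, i = o 1, i = o 2 | i = o 3].
Proof.
case: i => -[|[|[|[|i]]]] // lt;
  [apply: Or41 | apply: Or42 | apply: Or43 | apply: Or44]; exact: val_inj.
Qed.

Lemma band_cases (k : 'I_4) : band k -> k = o 2 \/ k = o 3.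
Proof. by case: (ord4_cases k) => ->; auto. Qed.

Lemma tl_cellsP c : ~~ band c.1 -> ~~ band c.2 -> c \in tl_cells.
Proof.
move=> b1 b2; apply: (all_cells (A := fun c => ~~ band c.1 && ~~ band c.2)); first by vm_compute.
by rewrite b1.
Qed.

Lemma earlier_separated c d : (cell_rank d < cell_rank c)%N ->
  adj d c || has (fun e => adj e d && ~~ adj e c) tl_cells.
Proof. by move: c d; apply: all_cells2; vm_compute. Qed.

Lemma tl_cells_adj e c : e \in tl_cells -> c \in tl_cells -> e != c -> adj e c.
Proof.
move=> et ct ec; apply: (all_cells2 (A := fun e c => [&& e \in tl_cells, c \in tl_cells & e != c])
  (B := adj)).
  by vm_compute.
exact/and3P.
Qed.

Lemma tl_not_adj_br e w : e \in tl_cells -> band w.1 -> band w.2 -> ~~ adj e w.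
Proof.
move=> et b1 b2; apply: (all_cells2 (A := fun e w => [&& e \in tl_cells, band w.1 & band w.2])
  (B := fun e w => ~~ adj e w)).
  by vm_compute.
exact/and3P.
Qed.

Lemma tl_rem_pairwise f : f \in tl_cells -> pairwise adj (f :: rem f tl_cells).
Proof. by move: f; apply/allP; vm_compute. Qed.

Definition tl_partner (c e f : cell) : bool := all (fun g => (g == e) || adj g c) (rem f tl_cells).

Lemma off_diag_partner c e : band c.1 != band c.2 -> e \in tl_cells -> ~~ adj e c ->
  has (fun f => tl_partner c e f && (cell_rank f < cell_rank c)%N) tl_cells.
Proof.
move=> cb et ec.
apply: (all_cells2 (A := fun c e => [&& band c.1 != band c.2, e \in tl_cells & ~~ adj e c])
  (B := fun c e => has (fun f => tl_partner c e f && (cell_rank f < cell_rank c)%N) tl_cells)).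
  by vm_compute.
exact/and3P.
Qed.

Lemma br_line_completion w l : band w.1 -> band w.2 -> l \in tl_lines ->
  has (fun f => has (fun g =>
    [&& pairwise adj [:: f; g; l.1; l.2], adj g w & (cell_rank f < cell_rank w)%N]) cells) cells.
Proof.
have /allP brw : all (fun w => (band w.1 && band w.2) ==> all (fun l =>
    has (fun f => has (fun g => [&& pairwise adj [:: f; g; l.1; l.2], adj g w
      & (cell_rank f < cell_rank w)%N]) cells) cells) tl_lines) cells.
  by vm_compute.
by move=> b1 b2; move: l; apply/allP; apply: (implyP (brw w (mem_cells w))); rewrite b1.
Qed.

Lemma adj_col (i : 'I_4) (w : cell) : ~~ band i -> band w.1 -> adj (i, w.2) w.
Proof.
move=> bi bw; rewrite /adj /= eqxx orbT andbT.
by apply: contraNneq bi => /(congr1 fst) /= ->.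
Qed.

Lemma adj_row (j : 'I_4) (w : cell) : ~~ band j -> band w.2 -> adj (w.1, j) w.
Proof.
move=> bj bw; rewrite /adj /= eqxx andbT.
by apply: contraNneq bj => /(congr1 snd) /= ->.
Qed.

Definition degeneracy_pattern (p q x y : bool) (c : cell) : bool :=
  if band c.1 then (if band c.2 then [|| p, q, x | y] else if odd c.2 then x else y)
  else band c.2 && (if odd c.1 then p else q).

Lemma card_cells (P : pred cell) : #|[set c | P c]| = count P cells.
Proof.
rewrite -size_filter; have /card_uniqP <- : uniq [seq c <- cells | P c] by apply: filter_uniq.
by apply: eq_card => c; rewrite inE mem_filter mem_cells andbT.
Qed.

Lemma card_degeneracy_pattern p q x y : [|| p, q, x | y] ==> (p && q) || (x && y) ->
  (#|[set c | ~~ degeneracy_pattern p q x y c]| \in [:: 4; 6; 8; 16])%N.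
Proof. by rewrite card_cells; case: p; case: q; case: x; case: y. Qed.

Section SudoQGrid.
Variables (R : rcfType) (v : cell -> 'rV[R[i]]_4).
Hypotheses (v_unit : forall c, hdot (v c) (v c) = 1)
  (v_orth : forall c d, adj c d -> hdot (v c) (v d) = 0).

Definition coord (e c : cell) : R[i] := hdot (v e) (v c).

Definition perp (e c : cell) : bool := coord e c == 0.

Definition degenerate (c : cell) : bool := has (fun e => ~~ adj e c && perp e c) tl_cells.

Definition redundant (c : cell) : Prop :=
  exists2 d, (cell_rank d < cell_rank c)%N & phase_eq (v d) (v c).

Lemma perp_adj e c : adj e c -> perp e c.
Proof. by move/v_orth/eqP. Qed.

Lemma line_orthonormal (L : seq cell) : pairwise adj L -> orthonormal (map v L).
Proof.
move=> L_adj; rewrite /orthonormal all_map pairwise_map; apply/andP; split.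
  by apply/allP => c _ /=; rewrite v_unit.
exact: sub_pairwise perp_adj L_adj.
Qed.

Lemma phase_eq_line f s w : pairwise adj (f :: s) -> size s = 3 ->
  all (fun e => perp e w || adj e w) s -> phase_eq (v w) (v f).
Proof.
move=> L_adj sz /allP sw; apply: (phase_eq_of_orthonormal (line_orthonormal L_adj)).
- by rewrite /= size_map sz.
- exact: v_unit.
- by rewrite all_map; apply/allP => e /sw /orP[// | /perp_adj].
Qed.

Lemma span_line e1 e2 s w : pairwise adj [:: e1, e2 & s] -> size s = 2 ->
  all (adj^~ w) s -> v w = coord e1 w *: v e1 + coord e2 w *: v e2.
Proof.
move=> L_adj sz sw; apply: (span2_expansion (line_orthonormal L_adj)).
  by rewrite /= size_map sz.
by rewrite all_map; apply/allP => e /(allP sw) /perp_adj.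
Qed.

Lemma perp_twin e1 e2 s u w : pairwise adj [:: e1, e2 & s] -> size s = 2 -> adj u w ->
  all (fun e => adj e u && adj e w) s -> perp e1 w = perp e2 u.
Proof.
move=> L_adj sz uw suw.
apply: (twin_coord_eq0 (line_orthonormal L_adj)); rewrite ?v_unit ?v_orth //.
  by rewrite /= size_map sz.
by rewrite all_map; apply/allP => e /(allP suw) /andP[eu ew] /=; rewrite !v_orth ?eqxx.
Qed.

Lemma free_coords_not_perp e1 e2 s t : pairwise adj [:: e1, e2 & s] -> size s = 2 ->
  all (adj^~ t) s -> ~~ (perp e1 t && perp e2 t).
Proof.
by move=> L_adj sz st; rewrite negb_and; apply: span2_coord_neq0 (span_line L_adj sz st) _.
Qed.

Lemma perp_of_phase_eq t e w : phase_eq (v t) (v e) -> adj t w -> perp e w.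
Proof. by move=> te /perp_adj; rewrite /perp /coord (phase_eq_hdotl_eq0 _ te). Qed.

Lemma first_reps_of_nondegenerate c : ~~ degenerate c ->
  c \in first_reps (fun c d => phase_eq (v c) (v d)) cell_rank.
Proof.
move=> nd; apply/mem_first_reps => d /earlier_separated /orP[dc | /hasP[e et /andP[ed ec]]].
  exact: orth_not_phase_eq (v_unit d) (v_orth dc).
have /negP nec : ~~ perp e c by apply: contra nd => pc; apply/hasP; exists e; rewrite // ec.
by move/(phase_eq_hdotr_eq0 (v e)); rewrite (v_orth ed) eqxx => /esym.
Qed.

Lemma tl_nondegenerate c : c \in tl_cells -> ~~ degenerate c.
Proof.
move=> ct; apply/hasPn => e et; case: (eqVneq e c) => [-> | ec].
  by rewrite /perp /coord v_unit oner_eq0 andbF.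
by rewrite tl_cells_adj.
Qed.

Lemma phase_eq_tl_partner c e f : perp e c -> f \in tl_cells -> tl_partner c e f ->
  phase_eq (v c) (v f).
Proof.
move=> ec ft /allP part; apply: (phase_eq_line (tl_rem_pairwise ft)); first by rewrite size_rem.
by apply/allP => g /part /orP[/eqP -> | ->]; rewrite ?ec ?orbT.
Qed.

Lemma off_diag_redundant c : band c.1 != band c.2 -> degenerate c -> redundant c.
Proof.
move=> cb /hasP[e et /andP[ec pc]].
have /hasP[f ft /andP[part lt]] := off_diag_partner cb et ec.
by exists f => //; apply/phase_eq_sym/(phase_eq_tl_partner pc ft part).
Qed.

Definition perp_tl_line (w : cell) : bool := has (fun l => perp l.1 w && perp l.2 w) tl_lines.

Lemma br_degenerate w : band w.1 -> band w.2 -> degenerate w = has (perp^~ w) tl_cells.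
Proof. by move=> b1 b2; apply: eq_in_has => e et; rewrite tl_not_adj_br. Qed.

Lemma br_degenerate_of_line w : band w.1 -> band w.2 -> perp_tl_line w -> degenerate w.
Proof.
move=> b1 b2 /hasP[l lt /andP[p1 _]]; rewrite br_degenerate //; apply/hasP; exists l.1 => //.
by move: lt; rewrite !inE => /or4P[] /eqP ->.
Qed.

Lemma br_redundant w : band w.1 -> band w.2 -> perp_tl_line w -> redundant w.
Proof.
move=> b1 b2 /hasP[l lt /andP[p1 p2]].
have /hasP[f _ /hasP[g _ /and3P[L_adj gw lt']]] := br_line_completion b1 b2 lt.
exists f => //; apply/phase_eq_sym/(phase_eq_line L_adj) => //=.
by rewrite p1 p2 gw !orbT.
Qed.

Definition row_config (w : cell) (k : 'I_4) := [&& band k, adj (k, o 2) w & adj (k, o 3) w].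
Definition col_config (w : cell) (l : 'I_4) := [&& band l, adj (o 2, l) w & adj (o 3, l) w].

Lemma coord_span e y x w : v w = coord y w *: v y + coord x w *: v x -> adj e y ->
  coord e w = coord x w * coord e x.
Proof. by move=> ew ey; rewrite /coord {1}ew hdotDr !hdotZr v_orth // mulr0 add0r. Qed.

Lemma row_coords w k : row_config w k ->
  [/\ (coord (k, o 0) w != 0) || (coord (k, o 1) w != 0),
      coord (o 0, o 0) w = coord (k, o 1) w * coord (o 0, o 0) (k, o 1),
      coord (o 0, o 1) w = coord (k, o 0) w * coord (o 0, o 1) (k, o 0),
      coord (o 1, o 0) w = coord (k, o 1) w * coord (o 1, o 0) (k, o 1) &
      coord (o 1, o 1) w = coord (k, o 0) w * coord (o 1, o 1) (k, o 0)].
Proof.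
case/and3P=> /band_cases kP k2 k3.
have ew : v w = coord (k, o 0) w *: v (k, o 0) + coord (k, o 1) w *: v (k, o 1).
  by apply: (span_line (s := [:: (k, o 2); (k, o 3)])); rewrite //= ?k2 ?k3 //; case: kP => ->.
have ew' := etrans ew (addrC _ _).
split; first exact: span2_coord_neq0 ew (v_unit w).
all: first [apply: coord_span ew _ | apply: coord_span ew' _]; by case: kP => ->.
Qed.

Lemma col_coords w l : col_config w l ->
  [/\ coord (o 0, o 0) w = coord (o 1, l) w * coord (o 0, o 0) (o 1, l),
      coord (o 0, o 1) w = coord (o 1, l) w * coord (o 0, o 1) (o 1, l),
      coord (o 1, o 0) w = coord (o 0, l) w * coord (o 1, o 0) (o 0, l) &
      coord (o 1, o 1) w = coord (o 0, l) w * coord (o 1, o 1) (o 0, l)].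
Proof.
case/and3P=> /band_cases lP l2 l3.
have ew : v w = coord (o 0, l) w *: v (o 0, l) + coord (o 1, l) w *: v (o 1, l).
  by apply: (span_line (s := [:: (o 2, l); (o 3, l)])); rewrite //= ?l2 ?l3 //; case: lP => ->.
have ew' := etrans ew (addrC _ _).
by split; first [apply: coord_span ew _ | apply: coord_span ew' _]; case: lP => ->.
Qed.

Lemma cross_identity w k l : row_config w k -> col_config w l ->
  coord (o 0, o 0) (k, o 1) * coord (o 1, o 1) (k, o 0) *
    coord (o 0, o 1) (o 1, l) * coord (o 1, o 0) (o 0, l) =
  coord (o 1, o 0) (k, o 1) * coord (o 0, o 1) (k, o 0) *
    coord (o 0, o 0) (o 1, l) * coord (o 1, o 1) (o 0, l).
Proof.
move=> /row_coords[nz r00 r01 r10 r11] /col_coords[q00 q01 q10 q11].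
apply: (cross_ratio nz); [exact: etrans (esym r00) q00 | exact: etrans (esym r01) q01 |
  exact: etrans (esym r10) q10 | exact: etrans (esym r11) q11].
Qed.

Lemma bl_degenerate k : band k ->
  degenerate (k, o 0) = perp (o 0, o 1) (k, o 0) || perp (o 1, o 1) (k, o 0) /\
  degenerate (k, o 1) = perp (o 0, o 0) (k, o 1) || perp (o 1, o 0) (k, o 1).
Proof. by case/band_cases => ->; rewrite /degenerate /= !orbF. Qed.

Lemma tr_degenerate l : band l ->
  degenerate (o 0, l) = perp (o 1, o 0) (o 0, l) || perp (o 1, o 1) (o 0, l) /\
  degenerate (o 1, l) = perp (o 0, o 0) (o 1, l) || perp (o 0, o 1) (o 1, l).
Proof. by case/band_cases => ->; rewrite /degenerate /= !orbF. Qed.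

Lemma cross_nondegenerate w k l : row_config w k -> col_config w l ->
  ~~ degenerate (k, o 0) -> ~~ degenerate (k, o 1) -> ~~ degenerate (o 1, l) ->
  ~~ degenerate w.
Proof.
move=> rc cc; have [nz r00 r01 r10 r11] := row_coords rc; have [q00 q01 _ _] := col_coords cc.
case/and3P: rc => /bl_degenerate[-> ->] _ _; case/and3P: cc => /tr_degenerate[_ ->] _ _.
move=> /norP[yb yd] /norP[xa xc] /norP[pa pb]; rewrite /perp in xa xc yb yd.
have /andP[a0 b0] :=
  cross_ratio_neq0 nz (etrans (esym r00) q00) (etrans (esym r01) q01) xa yb pa pb.
rewrite /degenerate /= /perp r00 r01 r10 r11 !mulf_eq0 (negbTE a0) (negbTE b0).
by rewrite (negbTE xa) (negbTE xc) (negbTE yb) (negbTE yd) !andbF.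
Qed.

Definition off_diag_degenerate : bool :=
  [|| degenerate (o 1, o 2), degenerate (o 0, o 2), degenerate (o 2, o 1) | degenerate (o 2, o 0)].

Lemma tr_twins :
  [/\ perp (o 1, o 0) (o 0, o 3) = perp (o 1, o 1) (o 0, o 2),
      perp (o 1, o 1) (o 0, o 3) = perp (o 1, o 0) (o 0, o 2),
      perp (o 0, o 0) (o 1, o 3) = perp (o 0, o 1) (o 1, o 2) &
      perp (o 0, o 1) (o 1, o 3) = perp (o 0, o 0) (o 1, o 2)].
Proof.
by split; [apply: (perp_twin (s := [:: (o 0, o 0); (o 0, o 1)]))
          | apply: (perp_twin (s := [:: (o 0, o 0); (o 0, o 1)]))
          | apply: (perp_twin (s := [:: (o 1, o 0); (o 1, o 1)]))
          | apply: (perp_twin (s := [:: (o 1, o 0); (o 1, o 1)]))].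
Qed.

Lemma bl_twins :
  [/\ perp (o 0, o 1) (o 3, o 0) = perp (o 1, o 1) (o 2, o 0),
      perp (o 1, o 1) (o 3, o 0) = perp (o 0, o 1) (o 2, o 0),
      perp (o 0, o 0) (o 3, o 1) = perp (o 1, o 0) (o 2, o 1) &
      perp (o 1, o 0) (o 3, o 1) = perp (o 0, o 0) (o 2, o 1)].
Proof.
by split; [apply: (perp_twin (s := [:: (o 0, o 0); (o 1, o 0)]))
          | apply: (perp_twin (s := [:: (o 0, o 0); (o 1, o 0)]))
          | apply: (perp_twin (s := [:: (o 0, o 1); (o 1, o 1)]))
          | apply: (perp_twin (s := [:: (o 0, o 1); (o 1, o 1)]))].
Qed.

Lemma twin_degenerate :
  [/\ degenerate (o 0, o 3) = degenerate (o 0, o 2),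
      degenerate (o 1, o 3) = degenerate (o 1, o 2),
      degenerate (o 3, o 0) = degenerate (o 2, o 0) &
      degenerate (o 3, o 1) = degenerate (o 2, o 1)].
Proof.
have [t0 t1 t2 t3] := tr_twins; have [b0 b1 b2 b3] := bl_twins.
have [-> ->] := tr_degenerate (isT : band (o 3)); have [-> ->] := tr_degenerate (isT : band (o 2)).
have [-> ->] := bl_degenerate (isT : band (o 3)); have [-> ->] := bl_degenerate (isT : band (o 2)).
by split; rewrite ?t0 ?t1 ?t2 ?t3 ?b0 ?b1 ?b2 ?b3 orbC.
Qed.

Lemma cross_pattern :
  off_diag_degenerate ->
  [|| perp (o 0, o 1) (o 1, o 2) && perp (o 1, o 1) (o 0, o 2),
      perp (o 0, o 0) (o 1, o 2) && perp (o 1, o 0) (o 0, o 2),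
      perp (o 1, o 0) (o 2, o 1) && perp (o 1, o 1) (o 2, o 0)
    | perp (o 0, o 0) (o 2, o 1) && perp (o 0, o 1) (o 2, o 0)].
Proof.
(* Cell (3,3) gives the identity for column 2 of the top-right block and cell (3,2) the one for
   column 3; the twins translate the latter back to column 2. *)
have E1 := congr1 (eq_op^~ 0) (cross_identity (w := (o 3, o 3)) (k := o 2) (l := o 2) isT isT).
have E2 := congr1 (eq_op^~ 0) (cross_identity (w := (o 3, o 2)) (k := o 2) (l := o 3) isT isT).
have [t0 t1 t2 t3] := tr_twins; rewrite /perp in t0 t1 t2 t3.
move: E1 E2; rewrite /= !mulf_eq0 -!orbA t0 t1 t2 t3 => E1 E2.
rewrite /off_diag_degenerate /degenerate /= !orbF; apply: (cross_zero_pattern E1 E2).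
- exact: (free_coords_not_perp (s := [:: (o 1, o 0); (o 1, o 1)])).
- exact: (free_coords_not_perp (s := [:: (o 0, o 0); (o 0, o 1)])).
- exact: (free_coords_not_perp (s := [:: (o 0, o 1); (o 1, o 1)])).
- exact: (free_coords_not_perp (s := [:: (o 0, o 0); (o 1, o 0)])).
Qed.

Lemma perp_tl_line_of_col (j : 'I_4) e e' : (e', e) \in tl_lines ->
  phase_eq (v (o 0, j)) (v e) -> phase_eq (v (o 1, j)) (v e') ->
  forall w, band w.1 -> w.2 = j -> perp_tl_line w.
Proof.
move=> l_in pe pe' w bw wj; subst j; apply/hasP; exists (e', e) => //=.
by rewrite (perp_of_phase_eq pe) ?(perp_of_phase_eq pe') ?adj_col.
Qed.

Lemma perp_tl_line_of_row (i : 'I_4) e e' : (e', e) \in tl_lines ->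
  phase_eq (v (i, o 0)) (v e) -> phase_eq (v (i, o 1)) (v e') ->
  forall w, band w.2 -> w.1 = i -> perp_tl_line w.
Proof.
move=> l_in pe pe' w bw wi; subst i; apply/hasP; exists (e', e) => //=.
by rewrite (perp_of_phase_eq pe) ?(perp_of_phase_eq pe') ?adj_row.
Qed.

Lemma br_perp_tl_line :
  off_diag_degenerate ->
  forall w, band w.1 -> band w.2 -> perp_tl_line w.
Proof.
(* In each case the entries of one off-diagonal block are, up to phase, the top-left entries
   column by column (or row by row), so every bottom-right entry is orthogonal to a line of the
   top-left block. *)
have [t0 t1 t2 t3] := tr_twins; have [b0 b1 b2 b3] := bl_twins.
move=> /cross_pattern /or4P[] /andP[h1 h2] w w1 w2.
- have pe12 := phase_eq_tl_partner (f := (o 0, o 0)) h1 isT isT.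
  have pe02 := phase_eq_tl_partner (f := (o 1, o 0)) h2 isT isT.
  have pe13 := phase_eq_tl_partner (f := (o 0, o 1)) (etrans t2 h1) isT isT.
  have pe03 := phase_eq_tl_partner (f := (o 1, o 1)) (etrans t0 h2) isT isT.
  case/band_cases: w2 => wj;
    [exact: (perp_tl_line_of_col _ pe02 pe12) | exact: (perp_tl_line_of_col _ pe03 pe13)].
- have pe12 := phase_eq_tl_partner (f := (o 0, o 1)) h1 isT isT.
  have pe02 := phase_eq_tl_partner (f := (o 1, o 1)) h2 isT isT.
  have pe13 := phase_eq_tl_partner (f := (o 0, o 0)) (etrans t3 h1) isT isT.
  have pe03 := phase_eq_tl_partner (f := (o 1, o 0)) (etrans t1 h2) isT isT.
  case/band_cases: w2 => wj;
    [exact: (perp_tl_line_of_col _ pe02 pe12) | exact: (perp_tl_line_of_col _ pe03 pe13)].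
- have pe21 := phase_eq_tl_partner (f := (o 0, o 0)) h1 isT isT.
  have pe20 := phase_eq_tl_partner (f := (o 0, o 1)) h2 isT isT.
  have pe31 := phase_eq_tl_partner (f := (o 1, o 0)) (etrans b2 h1) isT isT.
  have pe30 := phase_eq_tl_partner (f := (o 1, o 1)) (etrans b0 h2) isT isT.
  case/band_cases: w1 => wi;
    [exact: (perp_tl_line_of_row _ pe20 pe21) | exact: (perp_tl_line_of_row _ pe30 pe31)].
- have pe21 := phase_eq_tl_partner (f := (o 1, o 0)) h1 isT isT.
  have pe20 := phase_eq_tl_partner (f := (o 1, o 1)) h2 isT isT.
  have pe31 := phase_eq_tl_partner (f := (o 0, o 0)) (etrans b3 h1) isT isT.
  have pe30 := phase_eq_tl_partner (f := (o 0, o 1)) (etrans b1 h2) isT isT.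
  case/band_cases: w1 => wi;
    [exact: (perp_tl_line_of_row _ pe20 pe21) | exact: (perp_tl_line_of_row _ pe30 pe31)].
Qed.

Lemma br_degenerate_iff w : band w.1 -> band w.2 ->
  degenerate w = off_diag_degenerate.
Proof.
move=> b1 b2; apply/idP/idP; last first.
  by move/br_perp_tl_line/(_ w b1 b2); apply: br_degenerate_of_line.
apply: contraTT => /norP[nP /norP[nQ /norP[nX nY]]].
have [d03 d13 d30 d31] := twin_degenerate.
case: w b1 b2 => i j /= /band_cases[] -> /band_cases[] ->.
- by apply: (cross_nondegenerate (k := o 3) (l := o 3)); rewrite ?d30 ?d31 ?d13.
- by apply: (cross_nondegenerate (k := o 3) (l := o 2)); rewrite ?d30 ?d31.
- by apply: (cross_nondegenerate (k := o 2) (l := o 3)); rewrite ?d13.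
- exact: (cross_nondegenerate (k := o 2) (l := o 2)).
Qed.

Lemma redundant_of_degenerate c : degenerate c -> redundant c.
Proof.
move=> dc; have [b1 | nb1] := boolP (band c.1); have [b2 | nb2] := boolP (band c.2).
- apply: (br_redundant b1 b2); apply: (br_perp_tl_line _ b1 b2).
  by rewrite -(br_degenerate_iff b1 b2).
- by apply: off_diag_redundant dc; rewrite b1 (negbTE nb2).
- by apply: off_diag_redundant dc; rewrite b2 (negbTE nb1).
- by move: dc; rewrite (negbTE (tl_nondegenerate (tl_cellsP nb1 nb2))).
Qed.

Lemma first_reps_nondegenerate :
  first_reps (fun c d => phase_eq (v c) (v d)) cell_rank = [set c | ~~ degenerate c].
Proof.
apply/setP => c; rewrite inE; apply/idP/idP; last exact: first_reps_of_nondegenerate.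
by move/mem_first_reps => first; apply/negP => /redundant_of_degenerate[d lt]; apply: first.
Qed.

Lemma degenerate_pattern c :
  degenerate c = degeneracy_pattern (degenerate (o 1, o 2)) (degenerate (o 0, o 2))
                   (degenerate (o 2, o 1)) (degenerate (o 2, o 0)) c.
Proof.
have [d03 d13 d30 d31] := twin_degenerate; rewrite /degeneracy_pattern.
have [b1 | nb1] := boolP (band c.1); have [b2 | nb2] := boolP (band c.2).
- exact: br_degenerate_iff.
- case: c b1 nb2 => i j /= /band_cases[] ->;
    by case: (ord4_cases j) => -> // _; rewrite ?d30 ?d31.
- case: c nb1 b2 => i j /= + /band_cases[] ->;
    by case: (ord4_cases i) => -> // _; rewrite ?d03 ?d13.
- exact: negbTE (tl_nondegenerate (tl_cellsP nb1 nb2)).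
Qed.

Lemma degenerate_constraint :
  off_diag_degenerate ==> (degenerate (o 1, o 2) && degenerate (o 0, o 2))
      || (degenerate (o 2, o 1) && degenerate (o 2, o 0)).
Proof.
apply/implyP => /cross_pattern; rewrite /degenerate /=.
by case/or4P => /andP[-> ->]; rewrite ?orbT.
Qed.

End SudoQGrid.

Lemma blk_band (i : 'I_4) : blk (inord (band i)) (inord (odd i)) = i.
Proof. by case: (ord4_cases i) => ->; apply: val_inj; rewrite /= !inordK. Qed.

Lemma sudoQ4_unit (R : rcfType) (S : 'I_4 -> 'I_4 -> 'rV[R[i]]_4) :
  sudoQ4 S -> forall c : cell, hdot (S c.1 c.2) (S c.1 c.2) = 1.
Proof. by case=> rows _ _ c; case: (rows c.1). Qed.

Lemma sudoQ4_orth (R : rcfType) (S : 'I_4 -> 'I_4 -> 'rV[R[i]]_4) :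
  sudoQ4 S -> forall c d : cell, adj c d -> hdot (S c.1 c.2) (S d.1 d.2) = 0.
Proof.
case=> rows cols blocks [i j] [k l] /andP[ne] /=.
case/or3P=> [/eqP ik | /eqP jl | /andP[/eqP bik /eqP bjl]].
- by subst k; case: (rows i) => _ -> //; apply: contra ne => /eqP ->.
- by subst l; case: (cols j) => _ -> //; apply: contra ne => /eqP ->.
- have [_ orth _] := blocks (inord (band i)) (inord (band j)).
  have := orth (inord (odd i), inord (odd j)) (inord (odd k), inord (odd l)).
  rewrite /= !blk_band bik bjl !blk_band; apply; apply: contra ne => /eqP [oik ojl].
  by rewrite -(blk_band i) -(blk_band k) -(blk_band j) -(blk_band l) bik bjl oik ojl.
Qed.

Theorem mainTheorem17 (R : realType) (S : 'I_4 -> 'I_4 -> 'rV[R[i]]_4)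
    (Rep : {set 'I_4 * 'I_4}) :
  sudoQ4 S -> phase_reps S Rep -> (#|Rep| \in [:: 4; 6; 8; 16])%N.
Proof.
move=> sudoQ [cover sep].
have v_unit := sudoQ4_unit sudoQ; have v_orth := sudoQ4_orth sudoQ.
rewrite (card_first_reps (fun c => phase_eq_refl _) (fun c d => @phase_eq_sym _ _ _ _)
  (fun c d e => @phase_eq_trans _ _ _ _ _) cell_rank_inj cover sep).
rewrite (first_reps_nondegenerate v_unit v_orth).
rewrite (@eq_finset _ _ _ (fun c => congr1 negb (degenerate_pattern v_unit v_orth c))).
exact: card_degeneracy_pattern (degenerate_constraint v_unit v_orth).
Qed.
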